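(* Let $r\geq 3$ be an integer such that an affine plane of order $r$ exists, and let $\mathcal{H}_r=(V\setminus S,E)$ be the hypergraph defined below. Under the uniform weight assignment, the top-level of $\mathcal{H}_r$ is perturbable.
   Context: An affine plane of order $r$ is an $r$-uniform hypergraph on $r^2$ points with $r(r+1)$ lines such that every pair of distinct points lies in exactly one line; its lines partition into $r+1$ parallel classes $L_1,\dots,L_{r+1}$, each consisting of $r$ pairwise disjoint lines covering all points. Given an affine plane $\mathcal{G}_r=(V,\mathcal{L})$ of order $r$, label its points $v_{i,j}$, $i,j\in[r]$, so that $L_1=\{\{v_{i,1},\dots,v_{i,r}\}: i\in[r]\}$ (rows) and $L_{r+1}=\{\{v_{1,i},\dots,v_{r,i}\}: i\in[r]\}$ (columns). Let $S=\{v_{r,i}: i\in[r-1]\}\cup\{v_{r-1,r}\}$. The hypergraph $\mathcal{H}_r$ has vertex set $V\setminus S$ and edge set $E=\{e\setminus S: e\in\mathcal{L}\setminus L_{r+1}\}$ (i.e. delete the lines of $L_{r+1}$ and remove the vertices of $S$ from each remaining line). A weight assignment on a hypergraph with vertex set $W$ is a function $w:W\to\mathbb{R}_{\ge 0}$ with $\sum_{v\in W}w(v)=1$; the uniform weight assignment is $w(v)=1/|W|$; the weight of a set $T$ is $w(T)=\sum_{v\in T}w(v)$. The top-level of a hypergraph $H=(W,E)$ with respect to $w$ is the hypergraph $(W,E')$ where $E'$ is the set of edges of maximum weight. A perturbation on a hypergraph $H=(W,E)$ is a function $p:W\to\mathbb{R}$ with $\sum_{v\in W}p(v)=0$ and $\sum_{v\in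 e}p(v)<0$ for every $e\in E$; $H$ is perturbable if a perturbation exists. *)

From HB Require Import structures.
From mathcomp Require Import all_boot all_order all_algebra.
From mathcomp Require Import reals.
Set Implicit Arguments. Unset Strict Implicit. Unset Printing Implicit Defensive.
Import Order.TTheory GRing.Theory Num.Theory.
Local Open Scope ring_scope.

Section Hyper.
Variables (R : realType) (T : finType).

Definition wt (w : T -> R) (A : {set T}) : R := \sum_(v in A) w v.

Definition weight_assignment (W : {set T}) (w : T -> R) : Prop :=
  (forall v, v \in W -> 0 <= w v) /\ \sum_(v in W) w v = 1.

(* uniform weight assignment on W: w(v) = 1/|W| (only values on W matter) *)
Definition uniform_weight (W : {set T}) : T -> R := fun _ => (#|W|%:R)^-1.

Definition top_level (E : {set {set T}}) (w : T -> R) : {set {set T}} :=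
  [set e in E | [forall f in E, wt w f <= wt w e]].

Definition perturbation (W : {set T}) (E : {set {set T}}) (p : T -> R) : Prop :=
  \sum_(v in W) p v = 0 /\ (forall e, e \in E -> wt p e < 0).

Definition perturbable (W : {set T}) (E : {set {set T}}) : Prop :=
  exists p : T -> R, perturbation W E p.
End Hyper.

(* Points: 'I_r * 'I_r ; the pair (i,j) (0-indexed) is the paper's v_{i+1,j+1}. *)
Definition point r := ('I_r * 'I_r)%type.

(* L is the set of lines; P k (k : 'I_(r+1)) are the parallel classes
   L_1, ..., L_{r+1} (P ord0 = L_1, P ord_max = L_{r+1}). *)
Definition affine_plane (r : nat) (L : {set {set point r}})
    (P : 'I_r.+1 -> {set {set point r}}) : Prop :=
  [/\ forall e, e \in L -> #|e| = r,
      #|L| = (r * r.+1)%N,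
      (forall x y : point r, x != y -> #|[set e in L | (x \in e) && (y \in e)]| = 1%N),
      (forall e, (e \in L) = [exists k, e \in P k]) &
      (forall k k' : 'I_r.+1, k != k' -> [disjoint P k & P k']) /\
      (forall k, [/\ #|P k| = r,
                   forall e f, e \in P k -> f \in P k -> e != f -> [disjoint e & f] &
                   forall x : point r, exists e, (e \in P k) && (x \in e)])].

Definition rows r : {set {set point r}} :=
  [set [set v : point r | v.1 == i] | i : 'I_r].
Definition columns r : {set {set point r}} :=
  [set [set v : point r | v.2 == j] | j : 'I_r].

(* S = {v_{r,i} : i in [r-1]} ∪ {v_{r-1,r}} (0-indexed below) *)
Definition Sset r : {set point r} :=
  [set v : point r | ((v.1 == r.-1 :> nat) && (v.2 < r.-1)%N)
                     || ((v.1 == r.-2 :> nat) && (v.2 == r.-1 :> nat))].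

Definition H_vertices r : {set point r} := ~: Sset r.
Definition H_edges r (L : {set {set point r}}) (P : 'I_r.+1 -> {set {set point r}})
  : {set {set point r}} :=
  [set e :\: Sset r | e in L :\: P ord_max].

From HB Require Import structures.
From mathcomp Require Import all_boot all_order all_algebra.
From mathcomp Require Import reals zify ring.
Set Implicit Arguments. Unset Strict Implicit. Unset Printing Implicit Defensive.
Import Order.TTheory GRing.Theory Num.Theory.
Local Open Scope ring_scope.

(* Under the uniform weight the top level consists of the edges of maximal
   size r, i.e. of the lines of the affine plane that avoid S; the first row
   shows that size r is attained.  Give every vertex of row i the value p(i),
   where p = -r on the last row, p = r on the row above it and p = -1 on the
   other rows.  The vertex set V \ S consists of r - 2 full rows, r - 1
   vertices of row r - 1 and one vertex of row r, so p sums to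
   -r(r-2) + r(r-1) - r = 0 on it.  A row avoiding S is one of the first
   r - 2 rows and has weight -r; any other line meets every row exactly once
   and has weight -(r-2). *)

Lemma wt_uniform (R : realType) (T : finType) (W A : {set T}) :
  wt (uniform_weight R W) A = #|A|%:R / #|W|%:R.
Proof. by rewrite /wt sumr_const mulr_natl. Qed.

Lemma top_level_uniform_card (R : realType) (T : finType) (W : {set T})
    (E : {set {set T}}) (e f : {set T}) :
  (0 < #|W|)%N -> e \in top_level E (uniform_weight R W) -> f \in E ->
  (#|f| <= #|e|)%N.
Proof.
move=> W_gt0; rewrite inE => /andP[_ /forall_inP le_fe /le_fe].
by rewrite !wt_uniform ler_pM2r ?invr_gt0 ?ltr0n // ler_nat.
Qed.

Lemma sum_fst (V : nmodType) (I J : finType) (A : {set I * J}) (F : I -> V) :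
  \sum_(v in A) F v.1 = \sum_i F i *+ #|[set j | (i, j) \in A]|.
Proof.
rewrite (eq_bigr (fun i => \sum_(j in [set j | (i, j) \in A]) F i)).
  by rewrite pair_big_dep; apply: eq_bigl => -[i j]; rewrite !inE.
by move=> i _; rewrite sumr_const.
Qed.

Definition row_set r (i : 'I_r) : {set point r} := [set v | v.1 == i].

Section AffinePlane.
Variables (r : nat) (L : {set {set point r}}) (P : 'I_r.+1 -> {set {set point r}}).
Hypotheses (planeLP : affine_plane L P) (P0 : P ord0 = rows r).

Lemma card_line e : e \in L -> #|e| = r.
Proof. by case: planeLP => cardL _ _ _ _; apply: cardL. Qed.

Lemma line_unique x y e f : x != y -> e \in L -> f \in L ->
  x \in e -> y \in e -> x \in f -> y \in f -> e = f.
Proof.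
case: planeLP => _ _ pairLP _ _ xy eL fL xe ye xf yf.
have /eqP/cards1P[g g_def] := pairLP x y xy.
have : e \in [set g] by rewrite -g_def !inE eL xe ye.
have : f \in [set g] by rewrite -g_def !inE fL xf yf.
by rewrite !inE => /eqP-> /eqP->.
Qed.

Lemma row_set_in_rows i : row_set i \in rows r.
Proof. exact: imset_f. Qed.

Lemma row_set_line i : row_set i \in L.
Proof.
case: planeLP => _ _ _ LP _; rewrite LP.
by apply/existsP; exists ord0; rewrite P0 row_set_in_rows.
Qed.

Lemma row_set_notin_last_class i : row_set i \notin P ord_max.
Proof.
case: planeLP => _ _ _ _ [disjP _].
have /disjP/disjointFr -> // : ord0 != ord_max :> 'I_r.+1.
  by rewrite -val_eqE /=; have := ltn_ord i; lia.
by rewrite P0 row_set_in_rows.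
Qed.

Lemma transversal_fst_inj e : e \in L -> e \notin rows r ->
  {in e &, injective (fun v : point r => v.1)}.
Proof.
move=> eL eNrow x y xe ye /= xy1; apply/eqP; apply: contraNT eNrow => xy.
by rewrite (line_unique xy eL (row_set_line x.1) xe ye) ?row_set_in_rows // !inE xy1.
Qed.

Lemma sum_transversal (V : nmodType) (F : 'I_r -> V) e :
  e \in L -> e \notin rows r -> \sum_(v in e) F v.1 = \sum_i F i.
Proof.
move=> eL eNrow; have inj1 := transversal_fst_inj eL eNrow.
rewrite -(big_imset F inj1) /=; apply: eq_bigl => i.
suff -> : [set v.1 | v in e] = setT by rewrite inE.
apply/eqP; rewrite eqEcard subsetT cardsT card_ord.
by rewrite /= (card_in_imset inj1) card_line.
Qed.

End AffinePlane.

Section Hr.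
Variables (R : realType) (n : nat).
Local Notation r := n.+3.

Lemma card_H_vertices_row (i : 'I_r) :
  #|[set j | (i, j) \in H_vertices r]| =
  if i == n.+2 :> nat then 1%N else if i == n.+1 :> nat then n.+2 else r.
Proof.
have [i2|i2] := eqVneq (i : nat) n.+2.
  apply/eqP/cards1P; exists ord_max; apply/setP => j.
  by rewrite !inE /= i2 eqxx -val_eqE /=; have := ltn_ord j; lia.
have [i1|i1] := eqVneq (i : nat) n.+1.
  suff -> : [set j | (i, j) \in H_vertices r] = [set~ ord_max] by rewrite cardsC1 card_ord.
  by apply/setP => j; rewrite !inE /= i1 eqxx ltn_eqF.
suff -> : [set j | (i, j) \in H_vertices r] = setT by rewrite cardsT card_ord.
by apply/setP => j; rewrite !inE /= (negbTE i1) (negbTE i2).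
Qed.

Definition row_perturbation (i : 'I_r) : R :=
  if i == n.+2 :> nat then - r%:R else if i == n.+1 :> nat then r%:R else -1.

Lemma sum_row_perturbation_H_vertices :
  \sum_(v in H_vertices r) row_perturbation v.1 = 0.
Proof.
rewrite sum_fst big_ord_recr big_ord_recr /=.
rewrite (eq_bigr (fun _ => -1 *+ r)) => [|i _]; last first.
  have i_lt := ltn_ord i.
  by rewrite card_H_vertices_row /row_perturbation /= !ltn_eqF // ltnW.
rewrite !card_H_vertices_row /row_perturbation /= eqxx ltn_eqF //= eqxx.
rewrite sumr_const card_ord.
ring.
Qed.

Lemma sum_row_perturbation : \sum_i row_perturbation i = - n.+1%:R.
Proof.
rewrite big_ord_recr big_ord_recr /=.
rewrite (eq_bigr (fun _ => -1)) => [|i _]; last first.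
  have i_lt := ltn_ord i.
  by rewrite /row_perturbation /= !ltn_eqF // ltnW.
rewrite /row_perturbation /= eqxx ltn_eqF //= eqxx sumr_const card_ord.
ring.
Qed.

Lemma row0_disjoint_Sset : [disjoint row_set (ord0 : 'I_r) & Sset r].
Proof. by apply/pred0P => -[i j]; rewrite !inE /=; case: eqP => // ->. Qed.

Lemma row_disjoint_Sset (i : 'I_r) : [disjoint row_set i & Sset r] -> (i < n.+1)%N.
Proof.
move=> iS; have notS x : x \in row_set i -> x \notin Sset r by move/(disjointFr iS)->.
have := notS (i, ord0); have := notS (i, ord_max); rewrite !inE /= eqxx.
move=> /(_ isT) i1 /(_ isT) i2; have := ltn_ord i; lia.
Qed.

Variables (L : {set {set point r}}) (P : 'I_r.+1 -> {set {set point r}}).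
Hypotheses (planeLP : affine_plane L P) (P0 : P ord0 = rows r).

Lemma row_perturbation_line_lt0 e : e \in L -> [disjoint e & Sset r] ->
  \sum_(v in e) row_perturbation v.1 < 0.
Proof.
move=> eL; have [/imsetP[i _ ->] iS|eNrow _] := boolP (e \in rows r).
  have i_lt := row_disjoint_Sset iS.
  rewrite (eq_bigr (fun _ => -1)) => [|v]; last first.
    by rewrite inE => /eqP->; rewrite /row_perturbation !ltn_eqF // ltnW.
  rewrite sumr_const (card_line planeLP (row_set_line planeLP P0 i)).
  by rewrite mulNrn oppr_lt0 ltr0n.
by rewrite (sum_transversal planeLP P0) // sum_row_perturbation oppr_lt0 ltr0n.
Qed.

Lemma top_level_H_edges e :
  e \in top_level (H_edges L P) (uniform_weight R (H_vertices r)) ->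
  e \in L /\ [disjoint e & Sset r].
Proof.
move=> e_top; have := e_top; rewrite inE => /andP[/imsetP[f]].
rewrite inE => /andP[_ fL] e_def _.
have row0_edge : row_set ord0 \in H_edges L P.
  apply/imsetP; exists (row_set ord0); last by rewrite (setDidPl row0_disjoint_Sset).
  by rewrite inE (row_set_notin_last_class planeLP P0) (row_set_line planeLP P0).
have vertices_gt0 : (0 < #|H_vertices r|)%N.
  by apply/card_gt0P; exists (ord0, ord0); rewrite !inE.
have := top_level_uniform_card vertices_gt0 e_top row0_edge.
rewrite (card_line planeLP (row_set_line planeLP P0 ord0)) => r_le.
have fS : f :\: Sset r = f.
  by apply/eqP; rewrite eqEcard subsetDl (card_line planeLP fL) -e_def.
by rewrite e_def fS; split; last exact/setDidPl.
Qed.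
End Hr.

Theorem mainTheorem3 (R : realType) (r : nat)
    (L : {set {set point r}}) (P : 'I_r.+1 -> {set {set point r}}) :
  (3 <= r)%N ->
  affine_plane L P ->
  P ord0 = rows r ->
  P ord_max = columns r ->
  perturbable R (H_vertices r)
    (top_level (H_edges L P) (uniform_weight R (H_vertices r))).
Proof.
case: r L P => [|[|[|n]]] L P // _ planeLP P0 _.
exists (fun v => @row_perturbation R n v.1); split.
  exact: sum_row_perturbation_H_vertices.
move=> e /(top_level_H_edges planeLP P0) [eL eS].
exact: row_perturbation_line_lt0 planeLP P0 e eL eS.
Qed.
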